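(* Let $E$ be a separable real Hilbert space, let $0<p<\infty$ be such that $p$ is not an even integer, and let $k=\lceil p/2\rceil$. Then for every $x\in E$, $$\lim_{h\to 0}\frac{\sum_{j=0}^{2k}\binom{2k}{j}(-1)^j\|x+(k-j)h\|^p}{\Big(\sum_{j=0}^{2k}\binom{2k}{j}(-1)^j|k-j|^p\Big)\|h\|^p}=\chi_{\{0\}}(x),$$ where the limit is taken over $h\in E\setminus\{0\}$, $h\to 0$, and $\chi_{\{0\}}$ is the indicator function of $\{0\}$ (equal to $1$ at $x=0$ and $0$ otherwise). *)

From HB Require Import structures.
From mathcomp Require Import all_boot all_order all_algebra.
From mathcomp Require Import all_classical all_reals all_analysis.
Set Implicit Arguments. Unset Strict Implicit. Unset Printing Implicit Defensive.
Import Order.TTheory GRing.Theory Num.Theory.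
Import numFieldNormedType.Exports.
Local Open Scope classical_set_scope.
Local Open Scope ring_scope.

(* A real inner product on E whose induced norm is the norm of E:
   symmetric, bilinear (linearity in the first argument + symmetry),
   and ||x||^2 = <x,x> (which also gives positive definiteness). *)
Definition is_inner_product (R : realType) (E : normedModType R)
  (inner : E -> E -> R) : Prop :=
  [/\ (forall x y, inner x y = inner y x),
      (forall a x y z, inner (a *: x + y) z = a * inner x z + inner y z)
    & (forall x, `|x| ^+ 2 = inner x x)].

Definition hilbert_space (R : realType) (E : completeNormedModType R) : Prop :=
  exists inner : E -> E -> R, is_inner_product inner.

Definition separable_space (T : topologicalType) : Prop :=
  exists S : set T, countable S /\ dense S.

Definition kceil (R : realType) (p : R) : nat := `|Num.ceil (p / 2)|%N.

Definition fdiff_num (R : realType) (E : normedModType R) (k : nat) (p : R)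
  (x h : E) : R :=
  \sum_(j < (2 * k).+1)
     ('C(2 * k, j))%:R * (-1) ^+ j * (`|x + (k%:R - j%:R) *: h| `^ p).

Definition fdiff_const (R : realType) (k : nat) (p : R) : R :=
  \sum_(j < (2 * k).+1)
     ('C(2 * k, j))%:R * (-1) ^+ j * (`|k%:R - j%:R| `^ p).

From HB Require Import structures.
From mathcomp Require Import all_boot all_order all_algebra.
From mathcomp Require Import all_classical all_reals all_analysis.
From mathcomp Require Import ring lra zify.
Set Implicit Arguments. Unset Strict Implicit. Unset Printing Implicit Defensive.
Import Order.TTheory GRing.Theory Num.Theory.
Import numFieldNormedType.Exports.
Local Open Scope classical_set_scope.
Local Open Scope ring_scope.

(* For x = 0 the numerator is exactly the constant times ||h||^p.  For x != 0 put
   a = ||x||^2; then ||x + t h||^p = a^(p/2) (1 + t b + t^2 g)^(p/2) with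
   b = 2 <x, h> / a = O(||h||) and g = ||h||^2 / a.  Expanding (1 + u)^(p/2) by
   Taylor to order 2k, the alternating binomial sum annihilates every power
   (k - j)^e with e < 2k, so the numerator is O(||h||^2k), and 2k > p.
   The constant is non-zero: for r != 0 it is an exponential sum in r with the k
   distinct frequencies ln (k - m), and it vanishes at r = 2, 4, ..., 2k - 2.  By
   Rolle's theorem such a sum has at most k - 1 zeros unless all its coefficients
   vanish, so it cannot also vanish at p, which lies in (2k - 2, 2k). *)

Section FiniteDifference.
Variable R : comRingType.
Implicit Types (n : nat) (f g : nat -> R).

(* [(-1) ^+ n] times the n-th forward difference of [f] at 0. *)
Definition findiff n f : R := \sum_(j < n.+1) 'C(n, j)%:R * (-1) ^+ j * f j.

Lemma findiffS n f : findiff n.+1 f = findiff n (fun j => f j - f j.+1).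
Proof.
rewrite /findiff big_ord_recl /= bin0.
under eq_bigr => j _ do rewrite /bump /= add1n binS natrD !mulrDl.
rewrite big_split /= [X in _ + (X + _)]big_ord_recr /= bin_small // !mul0r addr0.
under [RHS]eq_bigr => j _ do rewrite mulrBr.
rewrite sumrB [X in _ = X - _]big_ord_recl /= bin0 addrA /bump /=; congr (_ + _).
by rewrite -sumrN; apply: eq_bigr => j _; rewrite exprS; ring.
Qed.

Lemma findiffD n f g : findiff n (fun j => f j + g j) = findiff n f + findiff n g.
Proof. by rewrite -big_split; apply: eq_bigr => j _; rewrite mulrDr. Qed.

Lemma findiffZ n a f : findiff n (fun j => a * f j) = a * findiff n f.
Proof. by rewrite /findiff mulr_sumr; apply: eq_bigr => j _; ring. Qed.

Lemma findiff_sum n (I : finType) (F : I -> nat -> R) :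
  findiff n (fun j => \sum_i F i j) = \sum_i findiff n (F i).
Proof.
rewrite /findiff exchange_big; apply: eq_bigr => j _; exact: mulr_sumr.
Qed.

Lemma findiff_expr n i c : (i < n)%N -> findiff n (fun j => (c + j%:R) ^+ i) = 0.
Proof.
elim: n i => [//|n IHn] i lt_in.
have diffE j : (c + j%:R) ^+ i - (c + j.+1%:R) ^+ i =
    \sum_(l < i) - 'C(i, l)%:R * (c + j%:R) ^+ l.
  rewrite -natr1 addrA exprD1n big_ord_recr /= binn mulr1n opprD addrCA subrr.
  by rewrite addr0 -sumrN; apply: eq_bigr => l _; rewrite mulNr mulr_natl.
rewrite findiffS (funext diffE) findiff_sum big1 // => l _.
by rewrite findiffZ IHn ?mulr0 // (leq_trans (ltn_ord l)).
Qed.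

Lemma findiff_centered_expr k e : (e < 2 * k)%N ->
  findiff (2 * k) (fun j => (k%:R - j%:R) ^+ e) = 0.
Proof.
move=> lt_e; rewrite -(mulr0 ((-1) ^+ e)) -(findiff_expr (- k%:R) lt_e) -findiffZ.
by congr findiff; apply/funext => j; rewrite -exprMn mulN1r opprD opprK addrC.
Qed.

Lemma findiff_sym k f : (forall j, (j <= 2 * k)%N -> f (2 * k - j)%N = f j) ->
  findiff (2 * k) f =
  'C(2 * k, k)%:R * (-1) ^+ k * f k + 2 * \sum_(j < k) 'C(2 * k, j)%:R * (-1) ^+ j * f j.
Proof.
move=> f_sym; set F := fun j => 'C(2 * k, j)%:R * (-1) ^+ j * f j.
have F_sym j : (j <= 2 * k)%N -> F (2 * k - j)%N = F j.
  by move=> le_j; rewrite /F bin_sub // -signr_odd oddB // oddM /= signr_odd f_sym.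
rewrite /findiff -/(F _) -(big_mkord xpredT F) (@big_cat_nat _ _ _ k 0 (2 * k).+1) /=; [|lia|lia].
rewrite (@big_ltn _ _ _ k); last by lia.
rewrite addrCA; congr (_ + _).
have -> : \sum_(k.+1 <= i < (2 * k).+1) F i = \sum_(0 <= i < k) F i.
  rewrite -{1}[k.+1]add0n big_addn (_ : ((2 * k).+1 - k.+1 = k)%N); last by lia.
  rewrite big_nat_rev /=; apply: eq_big_nat => i /andP [_ lt_ik].
  by rewrite -F_sym; [congr F; lia | lia].
by rewrite big_mkord mulr_natl.
Qed.

End FiniteDifference.

Lemma ler_norm_findiff (R : numDomainType) n (f : nat -> R) B :
  (forall j, (j <= n)%N -> `|f j| <= B) -> `|findiff n f| <= 2 ^+ n * B.
Proof.
move=> fB; rewrite -[2]/(1 + 1 : R) exprDn mulr_suml.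
apply: le_trans (ler_norm_sum _ _ _) _; apply: ler_sum => j _.
rewrite !expr1n mulr1 normrM normrM normrX normrN normr1 expr1n mulr1 normr_nat.
by rewrite mulr_natl -mulr_natl ler_wpM2l ?fB // -ltnS.
Qed.

Section ExponentialSums.
Variable R : realType.
Implicit Types (n : nat) (c lam : nat -> R) (r : R).

Definition expsum n (c lam : nat -> R) (r : R) : R :=
  \sum_(m < n) c m * expR (lam m * r).

Lemma is_derive_expsum n c lam r :
  is_derive r 1 (expsum n c lam) (expsum n (fun m => c m * lam m) lam r).
Proof.
have -> : expsum n c lam = \sum_(m < n) (fun t => c m * expR (lam m * t)).
  by apply/funext => t; rewrite /expsum fct_sumE.
apply: is_derive_eq; rewrite /expsum; apply: eq_bigr => m _.
by rewrite /GRing.scale /=; ring.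
Qed.

Lemma rolle_interlace (f df : R -> R) (z : nat -> R) n :
  (forall r, is_derive r 1 f (df r)) ->
  (forall i, (i < n)%N -> z i < z i.+1) ->
  (forall i, (i <= n)%N -> f (z i) = 0) ->
  exists zeta : nat -> R,
    forall i, (i < n)%N -> z i < zeta i < z i.+1 /\ df (zeta i) = 0.
Proof.
move=> f_df z_incr f_z.
have zetaP i : exists t, (i < n)%N -> z i < t < z i.+1 /\ df t = 0.
  have [lt_in|_] := ltnP i n; last by exists 0.
  have [t t_in f't] : exists2 t, t \in `]z i, z i.+1[ & is_derive t 1 f 0.
    apply: Rolle; first exact: z_incr.
    - by move=> t _; have [] := f_df t.
    - by apply: derivable_within_continuous => t _; have [] := f_df t.
    - by rewrite !f_z // ltnW.
  exists t => _; split; first by rewrite in_itv /= in t_in.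
  by case: (f_df t) => _ <-; case: f't.
have [zeta {}zetaP] := choice zetaP.
by exists zeta.
Qed.

Lemma expsum_roots_coef0 n (c lam z : nat -> R) :
  (forall i j, (i < n)%N -> (j < n)%N -> lam i = lam j -> i = j) ->
  (forall i, (i.+1 < n)%N -> z i < z i.+1) ->
  (forall i, (i < n)%N -> expsum n c lam (z i) = 0) ->
  forall i, (i < n)%N -> c i = 0.
Proof.
elim: n c lam z => [//|n IHn] c lam z lam_inj z_incr c_roots.
pose mu m := lam m.+1 - lam 0%N.
pose c' m := c m.+1 * mu m.
pose g := expsum n.+1 c (fun m => lam m - lam 0%N).
have g_roots i : (i <= n)%N -> g (z i) = 0.
  move=> le_in; transitivity (expR (- (lam 0%N * z i)) * expsum n.+1 c lam (z i)).
    rewrite /g /expsum mulr_sumr; apply: eq_bigr => m _.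
    by rewrite mulrCA -expRD; congr (_ * expR _); ring.
  by rewrite c_roots // mulr0.
have g_deriv r : is_derive r 1 g (expsum n c' mu r).
  have := is_derive_expsum n.+1 c (fun m => lam m - lam 0%N) r.
  by rewrite [X in is_derive _ _ _ X]/expsum big_ord_recl subrr mulr0 mul0r add0r.
have [zeta zetaP] := rolle_interlace g_deriv z_incr g_roots.
have c'0 : forall i, (i < n)%N -> c' i = 0.
  apply: (IHn c' mu zeta) => [i j lt_in lt_jn /addIr|i lt_in|i /zetaP[] //].
    by move/lam_inj => /(_ lt_in lt_jn) [].
  have [/andP[_ lt_zeta_z] _] := zetaP i (ltnW lt_in).
  have [/andP[lt_z_zeta _] _] := zetaP i.+1 lt_in.
  exact: lt_trans lt_zeta_z lt_z_zeta.
have cS m : (m < n)%N -> c m.+1 = 0.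
  move=> lt_mn; have /eqP := c'0 m lt_mn; rewrite mulf_eq0 subr_eq0.
  by case/orP => /eqP // /lam_inj => /(_ lt_mn isT).
have c0 : c 0%N = 0.
  have := c_roots 0%N isT; rewrite /expsum big_ord_recl big1 => [|i _]; last first.
    by rewrite cS // mul0r.
  by rewrite addr0 => /eqP; rewrite mulf_eq0 (gt_eqF (expR_gt0 _)) orbF => /eqP.
by case=> [|i] // /cS.
Qed.

End ExponentialSums.

Section DifferenceConstant.
Variable R : realType.
Implicit Types (k : nat) (p r : R).

Lemma fdiff_constE k r :
  fdiff_const k r = findiff (2 * k) (fun j => `|k%:R - j%:R| `^ r).
Proof. by []. Qed.

Lemma fdiff_const_even k i : (i < k)%N -> fdiff_const k (2 * i)%:R = 0 :> R.
Proof.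
move=> lt_ik; rewrite fdiff_constE -(@findiff_centered_expr R k (2 * i)); last by lia.
congr findiff; apply/funext => j; rewrite powR_mulrn // -normrX ger0_norm //.
by rewrite exprM exprn_ge0 // sqr_ge0.
Qed.

Lemma fdiff_const_sym k r : r != 0 ->
  fdiff_const k r = 2 * \sum_(j < k) 'C(2 * k, j)%:R * (-1) ^+ j * (k - j)%:R `^ r.
Proof.
move=> r_neq0; rewrite fdiff_constE findiff_sym => [|j le_j].
  rewrite subrr normr0 powR0 // mulr0 add0r; congr (_ * _).
  by apply: eq_bigr => j _; rewrite -natrB ?ger0_norm // ltnW.
by rewrite natrB // natrM -normrN; congr (`|_| `^ _); ring.
Qed.

Lemma fdiff_const_neq0 k p : (0 < k)%N -> 2 * k%:R - 2 < p < 2 * k%:R ->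
  fdiff_const k p != 0.
Proof.
move=> k_gt0 /andP[p_gt p_lt]; apply/eqP => const_p.
pose c m := 2 * ('C(2 * k, m)%:R * (-1) ^+ m) : R.
pose lam m := ln (k - m)%:R : R.
pose z m := if (m < k.-1)%N then (2 * m.+1)%:R else p.
have expsumE r : r != 0 -> fdiff_const k r = expsum k c lam r.
  move=> r_neq0; rewrite fdiff_const_sym // /expsum mulr_sumr.
  apply: eq_bigr => m _; rewrite /c /lam /powR pnatr_eq0 subn_eq0 leqNgt ltn_ord /=.
  by rewrite mulrA [r * _]mulrC.
suff : c 0%N = 0 by rewrite /c bin0 !mulr1 => /eqP; rewrite pnatr_eq0.
apply: (@expsum_roots_coef0 R k c lam z _ _ _ 0%N k_gt0)
  => [i j lt_ik lt_jk /ln_inj|i lt_ik|i lt_ik].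
- rewrite !posrE !ltr0n !subn_gt0 => /(_ lt_ik lt_jk) /eqP.
  by rewrite eqr_nat => /eqP; lia.
- rewrite /z (_ : (i < k.-1)%N); last by lia.
  case: ifP => [_|/negbT]; first by rewrite ltr_nat; lia.
  rewrite -leqNgt => le_k_i; apply: le_lt_trans p_gt.
  by rewrite -[2]/(2%:R) -natrM -natrB ?leq_pmul2l; [rewrite ler_nat; lia | lia].
- have z_neq0 : z i != 0.
    rewrite /z; case: ifP => _; first by rewrite pnatr_eq0.
    have k_ge1 : 1 <= k%:R :> R by rewrite ler1n.
    by rewrite gt_eqF //; lra.
  rewrite -expsumE // /z; case: ifP => [lt_i|_]; last exact: const_p.
  by apply: fdiff_const_even; lia.
Qed.

Lemma kceil_bounds p : 0 < p -> ~ (exists n : nat, p = (2 * n)%:R) ->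
  (0 < kceil p)%N /\ 2 * (kceil p)%:R - 2 < p < 2 * (kceil p)%:R.
Proof.
move=> p_gt0 p_nev; have ceil_gt0 : 0 < Num.ceil (p / 2) by rewrite ceil_gt0 divr_gt0.
have kE : (kceil p)%:R = (Num.ceil (p / 2))%:~R :> R.
  by rewrite /kceil natr_absz gtr0_norm.
have /andP[lo hi] := ceil_itv (p / 2); rewrite intrD -kE /= in lo; rewrite -kE in hi.
split; first by rewrite -(ltr0n R) kE ltr0z.
have p_neq : p != 2 * (kceil p)%:R.
  by apply/eqP => pE; apply: p_nev; exists (kceil p); rewrite natrM.
by apply/andP; split; [lra | rewrite lt_neqAle p_neq /=; lra].
Qed.

End DifferenceConstant.

Section BinomialTaylor.
Variable R : realType.
Implicit Types (q u v B : R) (f df : R -> R).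

Lemma mvt_norm_le f df u B :
  (forall v, `|v| <= `|u| -> is_derive v 1 f (df v)) ->
  (forall v, `|v| <= `|u| -> `|df v| <= B) -> `|f u - f 0| <= B * `|u|.
Proof.
move=> f_df df_le.
have mvt a b : a <= b -> `|a| <= `|u| -> `|b| <= `|u| -> `|f b - f a| <= B * (b - a).
  move=> le_ab a_le b_le.
  have in_u v : v \in `[a, b] -> `|v| <= `|u|.
    move: a_le b_le; rewrite in_itv /= !ler_norml => /andP[? ?] /andP[? ?] /andP[? ?].
    by apply/andP; split; lra.
  have [c /in_u c_in ->] : exists2 c, c \in `[a, b] & f b - f a = df c * (b - a).
    apply: MVT_segment => // [v v_in|]; first exact/f_df/in_u/subset_itv_oo_cc.
    by apply: derivable_within_continuous => v /in_u/f_df[].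
  by rewrite normrM [`|b - a|]ger0_norm ?subr_ge0 // ler_wpM2r ?subr_ge0 ?df_le.
have [u_ge0|u_lt0] := leP 0 u.
  by rewrite (ger0_norm u_ge0) -[u in B * u]subr0 mvt ?normr0.
by rewrite distrC (ltr0_norm u_lt0) -[- u]sub0r mvt ?normr0 // ltW.
Qed.

Lemma is_derive_powR1D q v : 0 < 1 + v ->
  is_derive v 1 (fun t => (1 + t) `^ q) (q * (1 + v) `^ (q - 1)).
Proof.
move=> v_gt; have shift : is_derive v 1 (fun t : R => 1 + t) 1.
  by have := is_deriveD (is_derive_cst (1 : R) v 1) (is_derive_id v (1 : R)); rewrite add0r.
by have := is_derive1_comp (is_derive1_powR q v_gt) shift; rewrite mulr1.
Qed.

Lemma is_derive_monomial (a v : R) (m : nat) :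
  is_derive v 1 (fun t => a * t ^+ m) (a * (m%:R * v ^+ m.-1)).
Proof.
have -> : (fun t : R => a * t ^+ m) = horner (a *: 'X^m).
  by apply/funext => t; rewrite hornerZ hornerXn.
apply: is_derive_eq.
by rewrite derivZ derivXn hornerZ hornerMn hornerXn mulr_natl.
Qed.

Lemma powR1D_le q u : `|u| <= 2^-1 -> (1 + u) `^ q <= 2^-1 `^ q + (3 / 2) `^ q.
Proof.
rewrite ler_norml => /andP[u_ge u_le].
have [q_ge0|q_lt0] := leP 0 q.
  apply: le_trans (_ : (3 / 2) `^ q <= _); last by rewrite lerDr powR_ge0.
  by apply: ge0_ler_powR; rewrite ?nnegrE; lra.
apply: le_trans (_ : 2^-1 `^ q <= _); last by rewrite lerDl powR_ge0.
rewrite -[q]opprK powRN [X in _ <= X]powRN lef_pV2 ?posrE ?powR_gt0 //; try lra.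
by apply: ge0_ler_powR; rewrite ?nnegrE; lra.
Qed.

Lemma powR1D_taylor (M : nat) q : exists (c : nat -> R) (C : R), 0 <= C /\
  forall u, `|u| <= 2^-1 ->
  `|(1 + u) `^ q - \sum_(m < M) c m * u ^+ m| <= C * `|u| ^+ M.
Proof.
elim: M q => [|M IHM] q.
  exists (fun=> 0), (2^-1 `^ q + (3 / 2) `^ q); split; first by rewrite addr_ge0 ?powR_ge0.
  move=> u u_le; rewrite big_ord0 subr0 expr0 mulr1 ger0_norm ?powR_ge0 //.
  exact: powR1D_le.
(* The remainder for [q] differentiates to [q] times the remainder for [q - 1]. *)
have [c [C [C_ge0 c_taylor]]] := IHM (q - 1).
pose d m := if m is m'.+1 then q * c m' / m%:R else 1.
exists d, (`|q| * C); split; first by rewrite mulr_ge0.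
move=> u u_le.
pose f v := (1 + v) `^ q - \sum_(m < M.+1) d m * v ^+ m.
have f0 : f 0 = 0.
  rewrite /f addr0 powR1 big_ord_recl /= expr0 mulr1 big1 ?addr0 ?subrr // => i _.
  by rewrite expr0n /= mulr0.
have f_deriv v : `|v| <= `|u| ->
    is_derive v 1 f (q * ((1 + v) `^ (q - 1) - \sum_(m < M) c m * v ^+ m)).
  move=> v_le; have v_gt : 0 < 1 + v.
    by move: (le_trans v_le u_le); rewrite ler_norml => /andP[? _]; lra.
  have -> : f = (fun t => (1 + t) `^ q) - \sum_(m < M.+1) (fun t => d m * t ^+ m).
    by apply/funext => t; rewrite /f /= fct_sumE.
  apply: (is_derive_eq (is_deriveB (is_derive_powR1D q v_gt)
    (is_derive_sum (fun m => is_derive_monomial (d m) v m)))).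
  rewrite big_ord_recl /= mul0r mulr0 add0r mulrBr mulr_sumr; congr (_ - _).
  by apply: eq_bigr => i _; rewrite /d /bump /= add1n mulrA divfK ?pnatr_eq0 // mulrA.
rewrite -[X in `|X|]subr0 -{2}f0 exprSr mulrA; apply: (mvt_norm_le f_deriv) => v v_le.
rewrite normrM -mulrA ler_wpM2l // (le_trans (c_taylor v _)) ?(le_trans v_le) //.
by rewrite ler_wpM2l // lerXn2r ?normr_ge0.
Qed.

End BinomialTaylor.

Section QuadraticPerturbation.
Variables (R : realFieldType) (k : nat).
Implicit Types (b g s : R) (c : nat -> R).

Let t j : R := k%:R - j%:R.

Lemma findiff_quad_poly_le c (L1 L2 : R) : 0 <= L1 -> 0 <= L2 ->
  exists K, forall b g s, 0 <= s <= 1 -> `|b| <= L1 * s -> `|g| <= L2 * s ^+ 2 ->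
  `|findiff (2 * k) (fun j => \sum_(m < 2 * k) c m * (t j * b + t j ^+ 2 * g) ^+ m)|
    <= K * s ^+ (2 * k).
Proof.
(* Expanded in powers of [t j], only the [t j ^+ e] with [2 * k <= e] survive the
   finite difference, and each of them comes with a factor [s ^+ e]. *)
move=> L1_ge0 L2_ge0; pose D e := findiff (2 * k) (fun j => t j ^+ e).
exists (\sum_(m < 2 * k) \sum_(l < m.+1)
  `|c m| * 'C(m, l)%:R * L1 ^+ (m - l) * L2 ^+ l * `|D (m + l)%N|).
move=> b g s /andP[s_ge0 s_le1] b_le g_le.
have expandE j m : (t j * b + t j ^+ 2 * g) ^+ m =
    \sum_(l < m.+1) 'C(m, l)%:R * b ^+ (m - l) * g ^+ l * t j ^+ (m + l).
  rewrite (_ : _ + _ = t j * (b + t j * g)); last by ring.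
  rewrite exprMn [(b + _) ^+ _]exprDn mulr_sumr; apply: eq_bigr => l _.
  by rewrite exprMn exprD -mulr_natl; ring.
rewrite (_ : findiff _ _ = \sum_(m < 2 * k) \sum_(l < m.+1)
    c m * ('C(m, l)%:R * b ^+ (m - l) * g ^+ l) * D (m + l)%N).
  rewrite mulr_suml; apply: le_trans (ler_norm_sum _ _ _) _; apply: ler_sum => m _.
  rewrite mulr_suml; apply: le_trans (ler_norm_sum _ _ _) _; apply: ler_sum => l _.
  have [lt_2k|ge_2k] := ltnP (m + l) (2 * k).
    by rewrite /D findiff_centered_expr // !(mulr0, mul0r, normr0).
  have bg_le : `|b| ^+ (m - l) * `|g| ^+ l <= L1 ^+ (m - l) * L2 ^+ l * s ^+ (2 * k).
    apply: le_trans (_ : (L1 * s) ^+ (m - l) * (L2 * s ^+ 2) ^+ l <= _).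
      by apply: ler_pM; rewrite ?exprn_ge0 // lerXn2r // nnegrE mulr_ge0 ?exprn_ge0.
    rewrite [(L1 * s) ^+ _]exprMn [(L2 * _) ^+ _]exprMn -exprM mulrACA -exprD.
    rewrite ler_wpM2l ?mulr_ge0 ?exprn_ge0 //.
    by apply: ler_wiXn2l => //; have := ltn_ord l; lia.
  rewrite !normrM !normrX normr_nat -!mulrA !ler_wpM2l // mulrA.
  rewrite [X in _ <= X](_ : _ = L1 ^+ (m - l) * L2 ^+ l * s ^+ (2 * k) * `|D (m + l)%N|).
    by apply: ler_wpM2r.
  by ring.
transitivity (findiff (2 * k) (fun j => \sum_(m < 2 * k) \sum_(l < m.+1)
    c m * ('C(m, l)%:R * b ^+ (m - l) * g ^+ l) * t j ^+ (m + l))).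
  congr findiff; apply/funext => j; apply: eq_bigr => m _.
  by rewrite expandE mulr_sumr; apply: eq_bigr => l _; rewrite mulrA.
rewrite findiff_sum; apply: eq_bigr => m _.
by rewrite findiff_sum; apply: eq_bigr => l _; rewrite findiffZ.
Qed.

Lemma findiff_quad_le (phi : R -> R) c (C L1 L2 : R) :
  0 <= C -> 0 <= L1 -> 0 <= L2 ->
  (forall u, `|u| <= 2^-1 ->
     `|phi u - \sum_(m < 2 * k) c m * u ^+ m| <= C * `|u| ^+ (2 * k)) ->
  exists K d, 0 < d /\ forall b g s, 0 <= s <= d ->
    `|b| <= L1 * s -> `|g| <= L2 * s ^+ 2 ->
    `|findiff (2 * k) (fun j => phi (t j * b + t j ^+ 2 * g))| <= K * s ^+ (2 * k).
Proof.
move=> C_ge0 L1_ge0 L2_ge0 phi_taylor.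
have [K K_le] := findiff_quad_poly_le c L1_ge0 L2_ge0.
pose L := k%:R * L1 + k%:R ^+ 2 * L2.
have L_ge0 : 0 <= L by rewrite addr_ge0 ?mulr_ge0 ?exprn_ge0.
exists (2 ^+ (2 * k) * (C * L ^+ (2 * k)) + K), (2 * (L + 1))^-1.
split=> [|b g s /andP[s_ge0 s_le] b_le g_le]; first by rewrite invr_gt0; lra.
have Ls_le : L * s <= 2^-1.
  rewrite -(ler_pM2l (_ : 0 < 2 * (L + 1))); last by lra.
  apply: le_trans (_ : L * (2 * (L + 1) * (2 * (L + 1))^-1) <= _).
    by rewrite mulrCA ler_wpM2l // ler_wpM2l //; lra.
  by rewrite mulfV; lra.
have s_le1 : s <= 1.
  apply: le_trans s_le _; rewrite invf_le1; lra.
have u_le j : (j <= 2 * k)%N -> `|t j * b + t j ^+ 2 * g| <= L * s.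
  move=> le_j; have t_le : `|t j| <= k%:R.
    rewrite ler_norml; have : j%:R <= (2 * k)%:R :> R by rewrite ler_nat.
    by rewrite /t natrM; have := ler0n R j; lra.
  apply: le_trans (ler_normD _ _) _; rewrite !normrM mulrDl.
  apply: lerD; first by rewrite -mulrA; apply: ler_pM.
  rewrite -[X in _ <= X]mulrA; apply: ler_pM; rewrite ?mulr_ge0 // ?expr2 ?ler_pM //.
  by apply: le_trans g_le _; rewrite ler_wpM2l // ler_piMr.
rewrite (_ : findiff _ _ =
  findiff (2 * k) (fun j => phi (t j * b + t j ^+ 2 * g) -
                            \sum_(m < 2 * k) c m * (t j * b + t j ^+ 2 * g) ^+ m) +
  findiff (2 * k) (fun j => \sum_(m < 2 * k) c m * (t j * b + t j ^+ 2 * g) ^+ m)).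
  rewrite mulrDl; apply: le_trans (ler_normD _ _) (lerD _ (K_le _ _ _ _ _ _)) => //.
    rewrite -[X in _ <= X]mulrA -[C * _ * _]mulrA -exprMn.
    apply: ler_norm_findiff => j le_j.
    apply: le_trans (phi_taylor _ (le_trans (u_le _ le_j) Ls_le)) _.
    by rewrite ler_wpM2l ?lerXn2r ?nnegrE ?u_le ?mulr_ge0.
  by rewrite s_ge0 s_le1.
by rewrite -findiffD; congr findiff; apply/funext => j; rewrite subrK.
Qed.

End QuadraticPerturbation.

Section InnerProduct.
Variables (R : realType) (E : normedModType R) (ip : E -> E -> R).
Hypothesis ipP : is_inner_product ip.

Lemma normDZ_sqr (x h : E) t :
  `|x + t *: h| ^+ 2 = `|x| ^+ 2 + 2 * t * ip x h + t ^+ 2 * `|h| ^+ 2.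
Proof.
case: ipP => ip_sym ip_lin ip_norm.
have ipDZl z : ip (x + t *: h) z = ip x z + t * ip h z by rewrite addrC ip_lin addrC.
by rewrite !ip_norm ipDZl ip_sym ipDZl [ip h (x + _)]ip_sym ipDZl (ip_sym h x); ring.
Qed.

(* Cauchy-Schwarz, read off from [normDZ_sqr] and the triangle inequality. *)
Lemma ip_norm_le (x h : E) : `|ip x h| <= `|x| * `|h|.
Proof.
have := normDZ_sqr x h 1; rewrite scale1r expr1n !mulr1 mul1r => sqrE.
have := ler_dist_normD x h; rewrite ler_norml => /andP[lo1 lo2].
have up := ler_normD x h; have a_ge0 := normr_ge0 (x + h).
by rewrite ler_norml; apply/andP; split; nra.
Qed.

Lemma normDZ_powR (x h : E) t p : x != 0 ->
  `|x + t *: h| `^ p = (`|x| ^+ 2) `^ (p / 2) *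
    (1 + (t * (2 * ip x h / `|x| ^+ 2) + t ^+ 2 * (`|h| ^+ 2 / `|x| ^+ 2))) `^ (p / 2).
Proof.
move=> x_neq0; have a_gt0 : 0 < `|x| ^+ 2 by rewrite exprn_gt0 ?normr_gt0.
rewrite (_ : 1 + _ = `|x + t *: h| ^+ 2 / `|x| ^+ 2); last first.
  by rewrite normDZ_sqr; field; rewrite normr_eq0.
rewrite -powRM ?divr_ge0 ?exprn_ge0 ?(ltW a_gt0) // mulrCA divff ?lt0r_neq0 // mulr1.
by rewrite -powR_mulrn // -powRrM mulrC divfK.
Qed.

Lemma fdiff_numE k p (x h : E) :
  fdiff_num k p x h = findiff (2 * k) (fun j => `|x + (k%:R - j%:R) *: h| `^ p).
Proof. by []. Qed.

Lemma fdiff_num_le k p (x : E) : x != 0 -> exists K d, 0 < d /\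
  forall h, `|h| <= d -> `|fdiff_num k p x h| <= K * `|h| ^+ (2 * k).
Proof.
move=> x_neq0; set a := `|x| ^+ 2; have a_gt0 : 0 < a by rewrite exprn_gt0 ?normr_gt0.
have [c [C [C_ge0 taylor_c]]] := powR1D_taylor (2 * k) (p / 2).
have L1_ge0 : 0 <= 2 / `|x| by rewrite divr_ge0.
have L2_ge0 : 0 <= a^-1 by rewrite invr_ge0 ltW.
have [K [d [d_gt0 K_le]]] := findiff_quad_le C_ge0 L1_ge0 L2_ge0 taylor_c.
exists (a `^ (p / 2) * K), d; split => // h h_le.
have numE : fdiff_num k p x h = a `^ (p / 2) * findiff (2 * k) (fun j =>
    (1 + ((k%:R - j%:R) * (2 * ip x h / a) + (k%:R - j%:R) ^+ 2 * (`|h| ^+ 2 / a))) `^ (p / 2)).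
  by rewrite -findiffZ fdiff_numE; congr findiff; apply/funext => j; rewrite normDZ_powR.
rewrite numE normrM ger0_norm ?powR_ge0 // -[X in _ <= X]mulrA.
apply: ler_wpM2l; first exact: powR_ge0.
apply: K_le; first by rewrite normr_ge0 h_le.
  have -> : 2 / `|x| * `|h| = 2 * (`|x| * `|h|) / a by rewrite /a; field; rewrite normr_eq0.
  rewrite normf_div normrM (ger0_norm (ltW a_gt0)) ger0_norm //.
  apply: ler_wpM2r; first by rewrite invr_ge0 ltW.
  by apply: ler_wpM2l; last exact: ip_norm_le.
by rewrite ger0_norm ?divr_ge0 ?exprn_ge0 ?(ltW a_gt0) // mulrC.
Qed.

End InnerProduct.

Section Limits.
Variables (R : realType) (E : normedModType R).

Lemma fdiff_num0 k p (h : E) : fdiff_num k p 0 h = fdiff_const k p * `|h| `^ p.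
Proof.
rewrite /fdiff_num /fdiff_const mulr_suml; apply: eq_bigr => j _.
by rewrite add0r normrZ powRM // mulrA.
Qed.

Lemma powR_norm_cvg0 (r : R) : 0 < r -> `|h| `^ r @[h --> (0 : E)^'] --> 0.
Proof.
move=> r_gt0; apply/cvgr0Pnorm_lt => e e_gt0.
have /cvgr0Pnorm_lt/(_ e e_gt0)/nbhs_norm0P[del /= del_gt0 del_P] := powR_cvg0 r_gt0.
near=> h; apply: del_P; first by rewrite /= normr_id; near: h; exact: dnbhs0_lt.
by rewrite normr_gt0; near: h; exact: nbhs_dnbhs_neq.
Unshelve. all: end_near.
Qed.

(* No hypothesis on [c]: for [c = 0] the ratio is identically [0]. *)
Lemma ratio_powR_cvg0 (f : E -> R) (c p K d : R) (n : nat) :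
  p < n%:R -> 0 < d -> (forall h, `|h| <= d -> `|f h| <= K * `|h| ^+ n) ->
  (fun h => f h / (c * `|h| `^ p)) @ 0^' --> 0.
Proof.
move=> p_lt d_gt0 f_le; have r_gt0 : 0 < n%:R - p by rewrite subr_gt0.
pose g (h : E) := `|K / c| * `|h| `^ (n%:R - p).
have g_cvg0 : g h @[h --> (0 : E)^'] --> 0.
  by rewrite /g -(mulr0 `|K / c|); exact: cvgMl_tmp (powR_norm_cvg0 r_gt0).
have ratio_le : \forall h \near (0 : E)^', `|f h / (c * `|h| `^ p)| <= g h.
  near=> h; have h_gt0 : 0 < `|h| by rewrite normr_gt0; near: h; exact: nbhs_dnbhs_neq.
  have fh_le : `|f h| <= `|K| * `|h| ^+ n.
    apply: le_trans (f_le h _) _; first by apply/ltW; near: h; exact: dnbhs0_lt.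
    by apply: ler_wpM2r; [rewrite exprn_ge0 | exact: ler_norm].
  rewrite /g powRB; last by rewrite (gt_eqF h_gt0) implybT.
  rewrite powR_mulrn // normf_div normrM (ger0_norm (powR_ge0 `|h| p)) invfM.
  rewrite normf_div [X in _ <= X](_ : _ = `|K| * `|h| ^+ n * (`|c|^-1 * (`|h| `^ p)^-1)).
    by apply: ler_wpM2r => //; rewrite mulr_ge0 ?invr_ge0 ?powR_ge0.
  by ring.
apply/cvgr0Pnorm_lt => e e_gt0; near=> h.
apply: le_lt_trans (le_trans _ (ler_norm (g h))) _; first by near: h.
by near: h; exact: cvgr0_norm_lt g_cvg0 e e_gt0.
Unshelve. all: end_near.
Qed.

End Limits.

Theorem lemma3p9 (R : realType) (E : completeNormedModType R)
  (hE : hilbert_space E) (sE : separable_space E)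
  (p : R) (hp : 0 < p) (hpev : ~ (exists n : nat, p = (2 * n)%:R))
  (x : E) :
  (fun h : E => fdiff_num (kceil p) p x h
                / (fdiff_const (kceil p) p * `|h| `^ p))
    @ (0 : E)^' --> (if x == 0 then 1 else 0 : R).
Proof.
have [k_gt0 p_bounds] := kceil_bounds hp hpev.
case: eqP => [->|/eqP x_neq0].
  apply: cvg_near_cst; near=> h; rewrite fdiff_num0 divff // mulf_neq0 //.
    exact: fdiff_const_neq0.
  by rewrite powR_eq0 normr_eq0 (lt0r_neq0 hp) andbT; near: h; exact: nbhs_dnbhs_neq.
have [ip ipP] := hE; have [K [d [d_gt0 K_le]]] := fdiff_num_le ipP (kceil p) p x_neq0.
apply: ratio_powR_cvg0 d_gt0 K_le.
by case/andP: p_bounds => _; rewrite natrM.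
Unshelve. all: end_near.
Qed.
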